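(* Let $G$ be a finite simple group. Then for every positive integer $n$ divisible by $|G|^2$, there exists $s\in G\backslash\operatorname{Sur}_1(F_n,G)$ such that the image in $S_n$ of the stabilizer of $s$ in $B_n$ contains an $n$-cycle.
   Context: $\operatorname{Sur}_1(F_n,G)$ is the set of $(g_1,\dots,g_n)\in G^n$ with $\langle g_1,\dots,g_n\rangle=G$ and $g_1\cdots g_n=1$; $G\backslash\operatorname{Sur}_1(F_n,G)$ is its set of orbits under simultaneous conjugation $(g_i)\mapsto(gg_ig^{-1})$. $B_n$ acts on it from the right via $(\dots,g_i,g_{i+1},\dots)^{\sigma_i}=(\dots,g_{i+1},g_{i+1}^{-1}g_ig_{i+1},\dots)$, and $B_n\to S_n$ sends $\sigma_i\mapsto(i\ i+1)$. *)

From mathcomp Require Import all_boot all_fingroup all_solvable.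
Set Implicit Arguments. Unset Strict Implicit. Unset Printing Implicit Defensive.
Import GroupScope.
Local Open Scope group_scope.

Section Hurwitz.
Variable gT : finGroupType.

(* Sur_1(F_n, G): tuples (g_1,...,g_n) (a seq of size n) generating G with g_1 ... g_n = 1 *)
Definition Sur1 (G : {group gT}) (n : nat) (t : seq gT) : Prop :=
  [/\ size t = n, <<[set x in t]>> = G & \prod_(x <- t) x = 1].

(* right action of the braid generator sigma_i (0-indexed: positions i, i+1):
   (.., g_i, g_{i+1}, ..) |-> (.., g_{i+1}, g_{i+1}^-1 g_i g_{i+1}, ..) *)
Definition sigma_act (i : nat) (t : seq gT) : seq gT :=
  [seq if j == i then nth 1 t i.+1
       else if j == i.+1 then (nth 1 t i) ^ (nth 1 t i.+1)
       else nth 1 t j | j <- iota 0 (size t)].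

Definition sigmaV_act (i : nat) (t : seq gT) : seq gT :=
  [seq if j == i then (nth 1 t i.+1) ^ (nth 1 t i)^-1
       else if j == i.+1 then nth 1 t i
       else nth 1 t j | j <- iota 0 (size t)].

End Hurwitz.

(* A braid in B_n is represented by a word in the generators sigma_i^{+-1};
   (i, false) stands for sigma_i and (i, true) for sigma_i^{-1}, 0 <= i, i+1 < n. *)
Definition braid_word := seq (nat * bool).

Definition valid_word (n : nat) (w : braid_word) : bool :=
  all (fun p => p.1.+1 < n) w.

Definition braid_act (gT : finGroupType) (w : braid_word) (t : seq gT) : seq gT :=
  foldl (fun s p => if p.2 then sigmaV_act p.1 s else sigma_act p.1 s) t w.

(* the transposition (i i+1) in S_n (identity if out of range) *)
Definition adj_tperm (n i : nat) : 'S_n :=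
  match @insub nat (fun k => k < n) 'I_n i, @insub nat (fun k => k < n) 'I_n i.+1 with
  | Some a, Some b => tperm a b
  | _, _ => 1
  end.

Definition braid_perm (n : nat) (w : braid_word) : 'S_n :=
  \prod_(p <- w) adj_tperm n p.1.

Definition is_ncycle (n : nat) (p : 'S_n) : Prop :=
  exists x : 'I_n, porbit p x = [set: 'I_n].

(* Pick x <> 1 in the simple group G; its conjugacy class C generates G.  Put
   m = |G| and write n = |C| e m with e >= 2.  Let d list the elements of C, each
   repeated e times, and let t repeat every entry of d m times, so that t is made of
   runs of m equal entries: its product is 1 and it generates G.

   A strand encircling a block of strands with product 1 is a pure braid that
   conjugates the block.  So one strand of a run of y winding around a run of v and
   the runs in between conjugates v by y; the runs in between, conjugated as well,
   are restored by m - 1 further windings since y^m = 1.  As every element of C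
   occurs in t, each run can thus be conjugated by any element of <C> = G while the
   other runs are kept.

   Rotating d by one position only replaces the last entry of each block of e equal
   entries by the next element of C, and e >= 2 keeps the first one, so some pure
   braid carries t to its rotation by m.  Then delta^(n-m) rotates back, and
   sigma_1 ... sigma_(m-1) fixes the leading run of m equal entries; the permutation
   of delta^(n-m) sigma_1 ... sigma_(m-1) is an n-cycle. *)

From mathcomp Require Import all_boot all_fingroup all_solvable zify.
Set Implicit Arguments. Unset Strict Implicit.
Import GroupScope.
Local Open Scope group_scope.

Definition sigma_word (s : seq nat) : braid_word := [seq (j, false) | j <- s].

Lemma braid_act_cat (gT : finGroupType) w1 w2 (t : seq gT) :
  braid_act (w1 ++ w2) t = braid_act w2 (braid_act w1 t).
Proof. by rewrite /braid_act foldl_cat. Qed.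

Lemma size_braid_act (gT : finGroupType) w (t : seq gT) :
  size (braid_act w t) = size t.
Proof.
elim: w t => [|[i []] w IH] t //=; rewrite IH.
  by rewrite /sigmaV_act size_map size_iota.
by rewrite /sigma_act size_map size_iota.
Qed.

Lemma braid_perm_cat n w1 w2 :
  braid_perm n (w1 ++ w2) = braid_perm n w1 * braid_perm n w2.
Proof. by rewrite /braid_perm big_cat. Qed.

Lemma braid_perm_sigma_rev n s :
  braid_perm n (sigma_word (rev s)) = (braid_perm n (sigma_word s))^-1.
Proof.
have adj_tpermV i : (adj_tperm n i)^-1 = adj_tperm n i.
  rewrite /adj_tperm; case: insubP => [a _ _|_]; last by rewrite invg1.
  by case: insubP => [b _ _|_]; rewrite ?invg1 ?tpermV.
rewrite /braid_perm !big_map; elim: s => [|j s IH]; first by rewrite !big_nil invg1.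
by rewrite rev_cons -cats1 big_cat big_seq1 big_cons IH invMg adj_tpermV.
Qed.

Lemma valid_word_cat n w1 w2 :
  valid_word n (w1 ++ w2) = valid_word n w1 && valid_word n w2.
Proof. exact: all_cat. Qed.

Lemma valid_word_sigma_iota n i L : i + L < n -> valid_word n (sigma_word (iota i L)).
Proof.
move=> lt_n; apply/allP => p /mapP[j]; rewrite mem_iota => /andP[_ ltj] -> /=.
exact: leq_ltn_trans ltj lt_n.
Qed.

Lemma valid_word_sigma_rev n s :
  valid_word n (sigma_word (rev s)) = valid_word n (sigma_word s).
Proof. by rewrite /valid_word !all_map all_rev. Qed.

Section Slides.
Variable gT : finGroupType.
Implicit Types (a B c : seq gT) (y : gT).

Lemma sigma_act_cat a u v c :
  sigma_act (size a) (a ++ u :: v :: c) = a ++ v :: u ^ v :: c.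
Proof.
apply: (@eq_from_nth _ 1); first by rewrite size_map size_iota !size_cat.
move=> j; rewrite size_map size_iota => ltj.
rewrite (nth_map 0) ?size_iota // nth_iota // add0n.
rewrite !nth_cat !ltnn !subnn /= ltnNge leqnSn /= subSn // subnn /=.
case: (ltngtP j (size a)) => [ltja|ltaj|->]; last by rewrite subnn.
  by rewrite ifF //; lia.
case: eqP => [->|neq]; first by rewrite subSn // subnn.
by case E: (j - size a) => [|[|k]] //; lia.
Qed.

Lemma braid_act_sigma_iota B a y c :
  braid_act (sigma_word (iota (size a) (size B))) (a ++ y :: B ++ c)
  = a ++ B ++ (y ^ \prod_(z <- B) z) :: c.
Proof.
elim: B a y => [|b B IH] a y /=; first by rewrite big_nil conjg1.
rewrite sigma_act_cat -cat_rcons -(size_rcons a b) IH cat_rcons.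
by rewrite big_cons conjgM.
Qed.

Lemma braid_act_sigma_rev_iota B a y c :
  braid_act (sigma_word (rev (iota (size a) (size B)))) (a ++ B ++ y :: c)
  = a ++ y :: [seq z ^ y | z <- B] ++ c.
Proof.
elim/last_ind: B c => [|B b IH] c //=.
rewrite size_rcons -addn1 iotaD rev_cat /= -cats1 -catA /= catA.
by rewrite -size_cat sigma_act_cat -catA IH map_cat -catA.
Qed.

(* The strand at position p, resp. p + L, turns once around the L strands to its
   right, resp. left. *)
Definition twist_right p L := sigma_word (iota p L) ++ sigma_word (rev (iota p L)).
Definition twist_left p L := sigma_word (rev (iota p L)) ++ sigma_word (iota p L).

Lemma braid_act_twist_right a y B c :
  \prod_(z <- B) z = 1 ->
  braid_act (twist_right (size a) (size B)) (a ++ y :: B ++ c)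
  = a ++ y :: [seq z ^ y | z <- B] ++ c.
Proof.
move=> prodB; rewrite braid_act_cat braid_act_sigma_iota prodB conjg1.
exact: braid_act_sigma_rev_iota.
Qed.

Lemma braid_act_twist_left a B y c :
  \prod_(z <- B) z = 1 ->
  braid_act (twist_left (size a) (size B)) (a ++ B ++ y :: c)
  = a ++ [seq z ^ y | z <- B] ++ y :: c.
Proof.
move=> prodB; rewrite braid_act_cat braid_act_sigma_rev_iota.
rewrite -(size_map (conjg^~ y) B) braid_act_sigma_iota big_map -conjg_prod prodB.
by rewrite conj1g conjg1.
Qed.

End Slides.

Section PureReach.
Variable gT : finGroupType.
Implicit Types (t a B c : seq gT) (y : gT).

Definition pure_reach t t' :=
  exists w, [/\ valid_word (size t) w, braid_perm (size t) w = 1 & braid_act w t = t'].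

Lemma pure_reach_refl t : pure_reach t t.
Proof. by exists [::]; rewrite /braid_perm big_nil. Qed.

Lemma pure_reach_trans t1 t2 t3 :
  pure_reach t1 t2 -> pure_reach t2 t3 -> pure_reach t1 t3.
Proof.
move=> [w1 [v1 p1 <-]] [w2]; rewrite size_braid_act => -[v2 p2 <-].
exists (w1 ++ w2); split; last exact: braid_act_cat.
  by rewrite valid_word_cat v1 v2.
by rewrite braid_perm_cat p1 p2 mulg1.
Qed.

Lemma map_conjg1 B : [seq z ^ 1 | z <- B] = B.
Proof. by rewrite (eq_map (@conjg1 _)) map_id. Qed.

Lemma map_conjgM B y1 y2 :
  [seq z ^ y2 | z <- [seq z ^ y1 | z <- B]] = [seq z ^ (y1 * y2) | z <- B].
Proof. by rewrite -map_comp; apply: eq_map => z /=; rewrite conjgM. Qed.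

Lemma prod_map_conjg B y :
  \prod_(z <- B) z = 1 -> \prod_(z <- [seq z ^ y | z <- B]) z = 1.
Proof. by rewrite big_map -conjg_prod => ->; rewrite conj1g. Qed.

Lemma pure_reach_twist_right a y B c j :
  \prod_(z <- B) z = 1 ->
  pure_reach (a ++ y :: B ++ c) (a ++ y :: [seq z ^ (y ^+ j) | z <- B] ++ c).
Proof.
move=> prodB; elim: j => [|j IH]; first by rewrite map_conjg1; apply: pure_reach_refl.
apply: (pure_reach_trans IH); rewrite expgSr -map_conjgM.
set B' := [seq z ^ (y ^+ j) | z <- B].
exists (twist_right (size a) (size B')); split.
- rewrite valid_word_cat valid_word_sigma_rev andbb valid_word_sigma_iota //.
  by rewrite /B' !size_cat /= size_cat size_map; lia.
- by rewrite braid_perm_cat braid_perm_sigma_rev mulgV.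
- by rewrite braid_act_twist_right // prod_map_conjg.
Qed.

Lemma pure_reach_twist_left a B y c j :
  \prod_(z <- B) z = 1 ->
  pure_reach (a ++ B ++ y :: c) (a ++ [seq z ^ (y ^+ j) | z <- B] ++ y :: c).
Proof.
move=> prodB; elim: j => [|j IH]; first by rewrite map_conjg1; apply: pure_reach_refl.
apply: (pure_reach_trans IH); rewrite expgSr -map_conjgM.
set B' := [seq z ^ (y ^+ j) | z <- B].
exists (twist_left (size a) (size B')); split.
- rewrite valid_word_cat valid_word_sigma_rev andbb valid_word_sigma_iota //.
  by rewrite /B' !size_cat /= size_map; lia.
- by rewrite braid_perm_cat braid_perm_sigma_rev mulVg.
- by rewrite braid_act_twist_left // prod_map_conjg.
Qed.

End PureReach.

Lemma prod_nseq (gT : finGroupType) k (v : gT) : \prod_(z <- nseq k v) z = v ^+ k.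
Proof. by rewrite big_nseq iter_mulg_1. Qed.

Section Runs.
Variables (gT : finGroupType) (m : nat).
Implicit Types (d : seq gT) (v y : gT).

Definition runs d := flatten [seq nseq m v | v <- d].

Lemma runs_cat d1 d2 : runs (d1 ++ d2) = runs d1 ++ runs d2.
Proof. by rewrite /runs map_cat flatten_cat. Qed.

Lemma runs_cons v d : runs (v :: d) = nseq m v ++ runs d.
Proof. by []. Qed.

Lemma size_runs d : size (runs d) = (size d * m)%N.
Proof. by elim: d => [|v d IH] //=; rewrite size_cat size_nseq IH mulSn. Qed.

Lemma prod_runs d : {in d, forall v, v ^+ m = 1} -> \prod_(z <- runs d) z = 1.
Proof.
elim: d => [|v d IH] dm; first by rewrite big_nil.
rewrite /= big_cat prod_nseq dm ?mem_head // IH; first by rewrite /= mulg1.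
by move=> z dz; rewrite dm // inE dz orbT.
Qed.

Lemma runs_rot1 d : runs (seq.rot 1 d) = seq.rot m (runs d).
Proof.
case: d => [|v d] //; rewrite rot1_cons -cats1 runs_cat.
have := rot_size_cat (nseq m v) (runs d); rewrite size_nseq => ->.
by rewrite /runs /= cats0.
Qed.

Hypothesis m_gt0 : 0 < m.

Lemma mem_runs d z : (z \in runs d) = (z \in d).
Proof. by elim: d => [|v d IH] //=; rewrite mem_cat IH mem_nseq m_gt0 inE. Qed.

Lemma nth_runs d i : i < size d * m -> nth 1 (runs d) i = nth 1 d (i %/ m).
Proof.
elim: d i => [|v d IH] i //=; rewrite mulSn nth_cat size_nseq => lti.
case: ltnP => [ltim|leim]; first by rewrite nth_nseq ltim divn_small.
rewrite IH; last by lia.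
by rewrite -{2}(subnK leim) divnDr ?dvdnn // divnn m_gt0 addn1.
Qed.

Lemma nseq_pred_last v : nseq m v = nseq m.-1 v ++ [:: v].
Proof. by rewrite -{1}(prednK m_gt0); elim: m.-1 => //= k ->. Qed.

Lemma nseq_pred_head v : nseq m v = v :: nseq m.-1 v.
Proof. by rewrite -{1}(prednK m_gt0). Qed.

Lemma map_conjg_order B y :
  y ^+ m = 1 -> [seq z ^ (y ^+ m.-1) | z <- [seq z ^ y | z <- B]] = B.
Proof. by move=> ym; rewrite map_conjgM -expgS prednK // ym map_conjg1. Qed.

Lemma pure_reach_runs_conj_earlier d1 y d2 v d3 :
  y ^+ m = 1 -> v ^+ m = 1 -> {in d2, forall z, z ^+ m = 1} ->
  pure_reach (runs (d1 ++ y :: d2 ++ v :: d3)) (runs (d1 ++ y :: d2 ++ v ^ y :: d3)).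
Proof.
move=> ym vm d2m; set A := runs d1 ++ nseq m.-1 y.
have split_y e : runs (d1 ++ y :: e) = A ++ y :: runs e.
  by rewrite runs_cat runs_cons nseq_pred_last /A -!catA.
have prod_d2v : \prod_(z <- runs d2 ++ nseq m v) z = 1.
  by rewrite big_cat prod_runs // prod_nseq vm /= mulg1.
rewrite !split_y !runs_cat !runs_cons.
have := pure_reach_twist_right A y (runs d3) 1 prod_d2v.
rewrite -catA expg1 map_cat map_nseq -catA => /pure_reach_trans; apply.
rewrite -[in X in pure_reach _ X](map_conjg_order (runs d2) ym).
by apply: pure_reach_twist_right; rewrite prod_map_conjg ?prod_runs.
Qed.

Lemma pure_reach_runs_conj_later d1 v d2 y d3 :
  y ^+ m = 1 -> v ^+ m = 1 -> {in d2, forall z, z ^+ m = 1} ->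
  pure_reach (runs (d1 ++ v :: d2 ++ y :: d3)) (runs (d1 ++ v ^ y :: d2 ++ y :: d3)).
Proof.
move=> ym vm d2m; set C := nseq m.-1 y ++ runs d3.
have split_y u :
    runs (d1 ++ u :: d2 ++ y :: d3) = runs d1 ++ (nseq m u ++ runs d2) ++ y :: C.
  by rewrite !runs_cat !runs_cons runs_cat runs_cons (nseq_pred_head y) -!catA.
have prod_vd2 : \prod_(z <- nseq m v ++ runs d2) z = 1.
  by rewrite big_cat prod_runs // prod_nseq vm /= mul1g.
rewrite !split_y.
have := pure_reach_twist_left (runs d1) y C 1 prod_vd2.
rewrite expg1 map_cat map_nseq => /pure_reach_trans; apply.
have := pure_reach_twist_left (runs d1 ++ nseq m (v ^ y))
  (B := [seq z ^ y | z <- runs d2]) y C m.-1.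
by rewrite map_conjg_order // -!catA; apply; rewrite prod_map_conjg ?prod_runs.
Qed.

End Runs.

Lemma mem_zip (S T : eqType) (s : seq S) (t : seq T) x y :
  (x, y) \in zip s t -> x \in s /\ y \in t.
Proof.
elim: s t => [|a s IH] [|b t] //=; rewrite inE => /orP[/eqP[-> ->] | /IH[xs yt]].
  by split; apply: mem_head.
by rewrite !inE xs yt !orbT.
Qed.

Lemma zip_nth_split (S T : Type) (x0 : S) (y0 : T) s t p :
  size s = size t -> p < size s ->
  zip s t = zip (take p s) (take p t) ++
              (nth x0 s p, nth y0 t p) :: zip (drop p.+1 s) (drop p.+1 t).
Proof.
move=> sz lt_p; rewrite -{1}(cat_take_drop p s) -{1}(cat_take_drop p t).
by rewrite (drop_nth x0) // (drop_nth y0) -?sz // zip_cat // !size_take -sz.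
Qed.

Section RunsReach.
Variables (gT : finGroupType) (m : nat).
Hypothesis m_gt0 : 0 < m.
Implicit Types (a b d : seq gT) (x y h : gT).

Lemma pure_reach_runs_conj a x b y :
  y \in a ++ b -> {in a ++ b, forall v, v ^+ m = 1} -> x ^+ m = 1 ->
  pure_reach (runs m (a ++ x :: b)) (runs m (a ++ x ^ y :: b)).
Proof.
rewrite mem_cat => /orP[/splitPr[a1 a2] | /splitPr[b1 b2]] tor xm; rewrite -?catA /=.
  by apply: pure_reach_runs_conj_earlier => // [|z z2]; apply: tor;
    rewrite !(mem_cat, inE) ?eqxx ?z2 /= ?orbT.
by apply: pure_reach_runs_conj_later => // [|z z2]; apply: tor;
  rewrite !(mem_cat, inE) ?eqxx ?z2 /= ?orbT.
Qed.

Lemma pure_reach_runs_conj_gen a x b h :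
  h \in <<[set z in a ++ b]>> -> {in a ++ b, forall v, v ^+ m = 1} -> x ^+ m = 1 ->
  pure_reach (runs m (a ++ x :: b)) (runs m (a ++ x ^ h :: b)).
Proof.
move=> /gen_prodgP[k [c c_ab ->]] tor; rewrite -(big_map c predT id).
have: all (mem (a ++ b)) [seq c i | i <- index_enum 'I_k].
  by apply/allP => _ /mapP[i _ ->]; have := c_ab i; rewrite inE.
elim: (map c _) x => [|z cs IH] x /= => [_|/andP[z_ab cs_ab]] xm.
  by rewrite big_nil conjg1; apply: pure_reach_refl.
rewrite big_cons conjgM; apply: pure_reach_trans (pure_reach_runs_conj z_ab tor xm) _.
by apply: IH => //; rewrite -conjXg xm conj1g.
Qed.

(* The entries are replaced from left to right; the entries listed in S sit where d
   and d' agree, so they remain available as conjugators throughout. *)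
Lemma pure_reach_runs (S : {set gT}) d d' :
  size d' = size d -> {in d ++ d', forall v, v ^+ m = 1} ->
  {in S, forall z, (z, z) \in zip d d'} ->
  (forall i, i < size d -> nth 1 d' i \in nth 1 d i ^: <<S>>) ->
  pure_reach (runs m d) (runs m d').
Proof.
move=> sz tor common conj.
suff reach_prefix p : p <= size d -> pure_reach (runs m d) (runs m (take p d' ++ drop p d)).
  by have := reach_prefix _ (leqnn _); rewrite drop_size cats0 -sz take_size.
elim: p => [|p IH] lt_p; first by rewrite take0 drop0; apply: pure_reach_refl.
apply: pure_reach_trans (IH (ltnW lt_p)) _.
rewrite (drop_nth 1 lt_p) (take_nth 1) ?sz // cat_rcons.
case: (eqVneq (nth 1 d' p) (nth 1 d p)) => [-> | neq]; first exact: pure_reach_refl.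
have [h hS ->] := imsetP (conj p lt_p); apply: pure_reach_runs_conj_gen.
- apply: subsetP hS; apply/genS/subsetP => z /common.
  rewrite (zip_nth_split 1 1 (esym sz) lt_p) mem_cat inE => /or3P[zz | /eqP[zd zd'] | zz].
  + by rewrite mem_cat (mem_zip zz).2.
  + by rewrite -zd -zd' eqxx in neq.
  + by rewrite mem_cat (mem_zip zz).1 orbT.
- by move=> v; rewrite mem_cat => /orP[/mem_take | /mem_drop] v_d; apply: tor;
    rewrite mem_cat v_d ?orbT.
- by apply: tor; rewrite mem_cat mem_nth.
Qed.

End RunsReach.

Definition delta_word n := sigma_word (iota 0 n.-1).
Definition delta_pow n j : braid_word := flatten (nseq j (delta_word n)).
Definition return_word n m := delta_pow n (n - m) ++ sigma_word (iota 0 m.-1).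

Section Rotation.
Variable gT : finGroupType.
Implicit Types (t d : seq gT) (v : gT).

Lemma prod_rot t j : \prod_(z <- t) z = 1 -> \prod_(z <- seq.rot j t) z = 1.
Proof.
rewrite /seq.rot -{1}(cat_take_drop j t) !big_cat /= => prod_t.
by rewrite -(mulKg (\prod_(z <- take j t) z) (\prod_(z <- drop j t) z)) prod_t mulg1 mulVg.
Qed.

Lemma braid_act_delta t :
  \prod_(z <- t) z = 1 -> braid_act (delta_word (size t)) t = seq.rot 1 t.
Proof.
case: t => [//|y B]; rewrite big_cons => prod_yB.
have prodB : \prod_(z <- B) z = y^-1 by rewrite -(mulKg y (\prod_(z <- B) z)) prod_yB mulg1.
have := braid_act_sigma_iota B [::] y [::].
by rewrite /= cats0 prodB conjgE invgK mulgV mulg1 rot1_cons -cats1 => ->.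
Qed.

Lemma braid_act_delta_pow t j : \prod_(z <- t) z = 1 -> j <= size t ->
  braid_act (delta_pow (size t) j) t = seq.rot j t.
Proof.
elim: j t => [|j IH] t prod_t le_j; first by rewrite rot0.
rewrite /delta_pow /= braid_act_cat braid_act_delta // -(size_rot 1 t).
by rewrite IH ?size_rot ?prod_rot ?(ltnW le_j) // -rotD // addn1.
Qed.

Lemma braid_act_sigma_iota_nseq m v r :
  braid_act (sigma_word (iota 0 m.-1)) (nseq m v ++ r) = nseq m v ++ r.
Proof.
case: m => [//|m]; have := braid_act_sigma_iota (nseq m v) [::] v r.
rewrite size_nseq prod_nseq /= => ->; rewrite conjgE -expgS expgSr mulKg.
by elim: m => //= m ->.
Qed.

Lemma braid_act_return m d (t := runs m d) : 0 < size d -> \prod_(z <- t) z = 1 ->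
  braid_act (return_word (size t) m) (seq.rot m t) = t.
Proof.
case: d @t => [//|v d] t _; rewrite {}/t runs_cons; set t := nseq m v ++ _ => prod_t.
have le_m : m <= size t by rewrite size_cat size_nseq leq_addr.
rewrite braid_act_cat -(size_rot m t) braid_act_delta_pow ?prod_rot ?size_rot ?leq_subr //.
by rewrite -rotD ?subnK // rot_size braid_act_sigma_iota_nseq.
Qed.

End Rotation.

Lemma adj_tpermE n i (x : 'I_n) : i.+1 < n ->
  val (adj_tperm n i x) = if val x == i then i.+1 else if val x == i.+1 then i else val x.
Proof.
move=> lt_i; have lt_i' := ltnW lt_i.
rewrite /adj_tperm (insubT (fun k => k < n) lt_i') (insubT (fun k => k < n) lt_i).
case: tpermP => [-> | -> | /eqP ne_i /eqP ne_i1] /=; rewrite ?eqxx //.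
  by rewrite ifN //; lia.
by rewrite -!(inj_eq val_inj) /= in ne_i ne_i1; rewrite (negbTE ne_i) (negbTE ne_i1).
Qed.

Lemma braid_perm_sigma_iota n L (x : 'I_n) : L < n ->
  val (braid_perm n (sigma_word (iota 0 L)) x) =
  if val x == 0 then L else if val x <= L then (val x).-1 else val x.
Proof.
rewrite /braid_perm big_map; elim: L => [|L IH] lt_L.
  by rewrite big_nil perm1; case: (val x) => [|[]].
rewrite -addn1 iotaD big_cat big_seq1 permM adj_tpermE add0n ?addn1 // IH; last lia.
by case: (val x) => [|k] /=; repeat case: ifP; lia.
Qed.

Section ReturnCycle.
Variables n m k : nat.
Hypotheses (m_gt0 : 0 < m) (k_gt1 : 1 < k) (n_eq : n = (k * m)%N).
Local Notation rho := (braid_perm n (return_word n m)).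

Let ltn_mn : m < n.
Proof. by rewrite n_eq -{1}(mul1n m) ltn_pmul2r. Qed.

Lemma braid_perm_delta (x : 'I_n) :
  val (braid_perm n (delta_word n) x) = (val x + n.-1) %% n.
Proof.
have lt_n1 : n.-1 < n by have := ltn_mn; lia.
rewrite braid_perm_sigma_iota //; case: x => [[|x] lt_x] /=; first by rewrite modn_small.
rewrite ifT; last lia.
have -> : x.+1 + n.-1 = x + n by lia.
by rewrite modnDr modn_small //; lia.
Qed.

Lemma braid_perm_delta_pow j (x : 'I_n) :
  val (braid_perm n (delta_pow n j) x) = (val x + j * n.-1) %% n.
Proof.
elim: j x => [|j IH] x; first by rewrite /braid_perm /= big_nil perm1 addn0 modn_small.
have -> : delta_pow n j.+1 = delta_word n ++ delta_pow n j by [].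
rewrite braid_perm_cat permM IH braid_perm_delta modnDml.
by rewrite mulSn addnA.
Qed.

Lemma braid_perm_return_step (y : 'I_n) o b : o < m -> b < k -> val y = (o + b * m)%N ->
  val (rho y) = if b.+1 < k then (o + b.+1 * m)%N else if o == 0 then m.-1 else o.-1.
Proof.
move=> lt_o lt_b y_eq; have lt_mn := ltn_mn.
rewrite braid_perm_cat permM braid_perm_sigma_iota ?braid_perm_delta_pow; last lia.
have -> : (val y + (n - m) * n.-1 = (n - m).-1 * n + (o + b.+1 * m))%N.
  by rewrite y_eq mulSn; nia.
rewrite modnMDl; case: ltnP => [lt_b1 | le_k].
  by rewrite modn_small; [rewrite ifF ?ifF //; nia | rewrite n_eq; nia].
have -> : (o + b.+1 * m = o + n)%N by rewrite n_eq; congr (_ + _ * _)%N; lia.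
by rewrite modnDr modn_small; [case: eqP => // _; rewrite ifT //; lia | lia].
Qed.

Lemma braid_perm_return_run (y : 'I_n) o b : o < m -> b < k -> val y = o ->
  val ((rho ^+ b) y) = (o + b * m)%N.
Proof.
move=> lt_o + y_o; elim: b => [|b IH] lt_b; first by rewrite expg0 perm1 mul0n addn0.
by rewrite expgSr permM (braid_perm_return_step lt_o (ltnW lt_b) (IH (ltnW lt_b))) lt_b.
Qed.

Lemma braid_perm_return_cycle (y : 'I_n) o : o < m -> val y = o ->
  val ((rho ^+ k) y) = if o == 0 then m.-1 else o.-1.
Proof.
move=> lt_o y_o; have lt_k1 : k.-1 < k by lia.
rewrite -(prednK (ltnW k_gt1)) expgSr permM.
have y_k1 := braid_perm_return_run lt_o lt_k1 y_o.
by rewrite (braid_perm_return_step lt_o lt_k1 y_k1) prednK ?ltnn; lia.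
Qed.

Lemma is_ncycle_return : is_ncycle rho.
Proof.
have lt_0n : 0 < n by have := ltn_mn; lia.
pose x0 := Ordinal lt_0n; exists x0; set O := porbit rho x0.
have orbit_iter y i : y \in O -> (rho ^+ i) y \in O.
  by rewrite /O -eq_porbit_mem => /eqP <-; apply: mem_porbit.
have top_run j : j < m -> exists2 y, y \in O & val y = m.-1 - j.
  elim: j => [|j IH] lt_j.
    exists ((rho ^+ k) x0); first exact: mem_porbit.
    by rewrite (braid_perm_return_cycle (y := x0) m_gt0) ?subn0.
  have [y yO y_eq] := IH (ltnW lt_j); exists ((rho ^+ k) y); first exact: orbit_iter.
  by rewrite (braid_perm_return_cycle _ y_eq); [case: eqP; lia | lia].
have first_run o : o < m -> exists2 y, y \in O & val y = o.
  case: (posnP o) => [-> _ | o_gt0 lt_o]; first by exists x0; rewrite ?porbit_id.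
  have [|y yO y_eq] := top_run (m.-1 - o); first lia.
  by exists y; rewrite // y_eq; lia.
apply/setP => z; rewrite inE.
have [|y yO y_eq] := first_run (val z %% m); first by rewrite ltn_mod.
have lt_b : val z %/ m < k by rewrite ltn_divLR // -n_eq ltn_ord.
suff <- : (rho ^+ (val z %/ m)) y = z by apply: orbit_iter.
by apply: val_inj; rewrite (braid_perm_return_run _ lt_b y_eq) ?ltn_mod // addnC -divn_eq.
Qed.

End ReturnCycle.

Lemma nth_rot1 (T : Type) (x0 : T) (s : seq T) i :
  i.+1 < size s -> nth x0 (seq.rot 1 s) i = nth x0 s i.+1.
Proof. by case: s => [//|a s]; rewrite ltnS => lt_i; rewrite rot1_cons nth_rcons lt_i. Qed.

Lemma valid_word_return n m : 0 < n -> m <= n -> valid_word n (return_word n m).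
Proof.
move=> n_gt0 le_mn; rewrite valid_word_cat valid_word_sigma_iota ?andbT; last lia.
have valid_delta : valid_word n (delta_word n) by apply: valid_word_sigma_iota; lia.
by elim: (n - m) => //= j IH; rewrite valid_word_cat valid_delta.
Qed.

Lemma class_gen_simple (gT : finGroupType) (G : {group gT}) x :
  simple G -> x \in G -> x != 1 -> <<x ^: G>> = G.
Proof.
move=> /simpleP[_ simG] xG ntx.
have nsCG : <<x ^: G>> <| G.
  by rewrite /normal gen_subG class_subG // (subset_trans (class_norm x G) (norm_gen _)).
case: (simG _ nsCG) => // C1; have := mem_gen (class_refl G x).
by rewrite C1 inE (negbTE ntx).
Qed.

Section ClassRuns.
Variables (gT : finGroupType) (G : {group gT}) (x : gT) (m e : nat).
Hypotheses (genC : <<x ^: G>> = G) (x_m : x ^+ m = 1) (m_gt0 : 0 < m) (e_gt1 : 1 < e).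
Local Notation d := (runs e (enum (x ^: G))).

Lemma class_expg_eq1 y : y \in x ^: G -> y ^+ m = 1.
Proof. by move=> /imsetP[g _ ->]; rewrite -conjXg x_m conj1g. Qed.

Lemma mem_class_runs y : (y \in d) = (y \in x ^: G).
Proof. by rewrite mem_runs ?mem_enum // ltnW. Qed.

Lemma prod_class_runs : \prod_(z <- runs m d) z = 1.
Proof. by apply: prod_runs => y; rewrite mem_class_runs; apply: class_expg_eq1. Qed.

Lemma pure_reach_rot_class_runs : pure_reach (runs m d) (runs m (seq.rot 1 d)).
Proof.
have e_gt0 : 0 < e by lia.
apply: (pure_reach_runs m_gt0 (S := x ^: G)); first exact: size_rot.
- by move=> y; rewrite mem_cat mem_rot orbb mem_class_runs; apply: class_expg_eq1.
- move=> z zC; set j := index z (enum (x ^: G)).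
  have lt_j : j < size (enum (x ^: G)) by rewrite index_mem mem_enum.
  have lt_u1 : (j * e).+1 < size (enum (x ^: G)) * e.
    by apply: leq_trans (leq_mul lt_j (leqnn e)); rewrite mulSn; lia.
  apply/(nthP (1, 1)); exists (j * e)%N.
    by rewrite size_zip size_rot minnn size_runs ltnW.
  rewrite nth_zip ?size_rot // nth_rot1 ?size_runs // !nth_runs ?mulnK ?(ltnW lt_u1) //.
  by rewrite -addn1 divnMDl // divn_small // addn0 nth_index ?mem_enum.
- move=> i lt_i; rewrite genC.
  have /imsetP[g gG ->] : nth 1 d i \in x ^: G by rewrite -mem_class_runs mem_nth.
  by rewrite classGidl // -mem_class_runs -(mem_rot 1) mem_nth ?size_rot.
Qed.

Lemma class_runs_braid_fixed (t := runs m d) :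
  exists w,
    [/\ valid_word (size t) w, braid_act w t = t & is_ncycle (braid_perm (size t) w)].
Proof.
have d_gt1 : 1 < size d.
  by rewrite size_runs -cardE (leq_trans e_gt1) // leq_pmull // (cardD1 x) class_refl.
have [P [validP permP actP]] := pure_reach_rot_class_runs.
exists (P ++ return_word (size t) m); rewrite {}/t; split.
- rewrite valid_word_cat validP valid_word_return // size_runs.
    by rewrite muln_gt0 m_gt0 ltnW.
  by rewrite leq_pmull // ltnW.
- by rewrite braid_act_cat actP runs_rot1 braid_act_return ?prod_class_runs // ltnW.
- rewrite braid_perm_cat permP mul1g.
  by apply: (is_ncycle_return m_gt0 d_gt1); rewrite size_runs.
Qed.

End ClassRuns.

Lemma card_class_ltn (gT : finGroupType) (G : {group gT}) x :
  x \in G -> x != 1 -> #|x ^: G| < #|G|.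
Proof.
move=> xG ntx; apply: proper_card; apply/properP; split; first exact: class_subG.
exists 1; rewrite ?group1 //; apply/imsetP => -[g _ /esym/eqP].
by rewrite conjg_eq1 (negbTE ntx).
Qed.

Lemma sq_dvdn_decomp s m n : (s %| m)%N -> s < m -> 0 < n -> (m ^ 2 %| n)%N ->
  exists2 e, 1 < e & n = (s * e * m)%N.
Proof.
move=> /dvdnP[q ->] lt_s n_gt0 /dvdnP[c n_eq].
exists (c * q)%N; last by rewrite n_eq; nia.
have q_gt1 : 1 < q by move: lt_s; rewrite -{1}(mul1n s) ltn_mul2r => /andP[].
have c_gt0 : 0 < c by move: n_gt0; rewrite n_eq muln_gt0 => /andP[].
by rewrite (leq_trans q_gt1) // leq_pmull.
Qed.

Theorem corollary4p46 (gT : finGroupType) (G : {group gT}) :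
  simple G ->
  forall n : nat, 0 < n -> (#|G| ^ 2 %| n)%N ->
  exists t : seq gT,
    Sur1 G n t /\
    exists w : braid_word,
      [/\ valid_word n w,
          (exists2 g, g \in G & braid_act w t = [seq (x ^ g)%g | x : gT <- t])
        & is_ncycle (braid_perm n w)].
Proof.
move=> simG n n_gt0 sq_dvd_n; have [ntG _] := simpleP _ simG.
have [x xG ntx] := trivgPn _ ntG; have genC := class_gen_simple simG xG ntx.
have [|e e_gt1 n_eq] := sq_dvdn_decomp _ (card_class_ltn xG ntx) n_gt0 sq_dvd_n.
  by rewrite -index_cent1 dvdn_indexg.
have m_gt0 := cardG_gt0 G; have x_m := expg_cardG xG.
set t := runs #|G| (runs e (enum (x ^: G))).
have size_t : size t = n by rewrite !size_runs -cardE n_eq.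
have [w [valid_w fix_w cycle_w]] := class_runs_braid_fixed genC x_m m_gt0 e_gt1.
rewrite size_t in valid_w cycle_w.
exists t; split; last by exists w; split=> //; exists 1; rewrite ?group1 // map_conjg1.
split=> //; last exact: prod_class_runs.
rewrite -[RHS]genC; congr <<_>>; apply/setP => y.
by rewrite inE mem_runs // (mem_class_runs _ _ e_gt1).
Qed.
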